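(* Let $G$ be a finite group and $T$ a $G$-transfer system. If $T'$ is a saturated $G$-transfer system containing $T$, then $(T,T')$ is a compatible pair.
   Context: A $G$-transfer system is a partial order $\to$ on the set of subgroups of $G$ such that: $K\to H$ implies $K\le H$; $H\to H$ for all $H$; $L\to K$ and $K\to H$ imply $L\to H$; $K\to H$ implies $K\cap L\to H\cap L$ for every $L\le G$; $K\to H$ implies $gKg^{-1}\to gHg^{-1}$ for all $g\in G$. A transfer system is saturated if whenever $L\le K\le H$ and $L\to H$ is in it, then $K\to H$ is in it. A pair $(T,T')$ of $G$-transfer systems is compatible if (1) $T\subseteq T'$, and (2) for all subgroups $A,B,C$ with $B,C\le A$: if $B\to A$ is in $T$ and $B\cap C\to B$ is in $T'$, then $C\to A$ is in $T'$. *)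

From mathcomp Require Import all_boot all_fingroup.
Set Implicit Arguments. Unset Strict Implicit. Unset Printing Implicit Defensive.
Local Open Scope group_scope.

(* A relation on subgroups of G: R K H reads "K -> H".
   Only its values on subgroups of G matter. *)
Definition subgroup_rel (gT : finGroupType) := {group gT} -> {group gT} -> Prop.

Definition is_transfer_system (gT : finGroupType) (G : {group gT})
    (R : subgroup_rel gT) : Prop :=
      (forall K H : {group gT}, R K H -> K \subset G /\ H \subset G) /\
      (forall K H : {group gT}, R K H -> K \subset H) /\
      (forall H : {group gT}, H \subset G -> R H H) /\
      (forall L K H : {group gT}, R L K -> R K H -> R L H) /\
      (forall K H L : {group gT}, L \subset G -> R K H -> R (K :&: L)%G (H :&: L)%G) /\
      (forall (K H : {group gT}) (g : gT), g \in G -> R K H -> R (K :^ g)%G (H :^ g)%G).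

(* Antisymmetry follows from K -> H => K <= H, so this is a partial order. *)

Definition saturated (gT : finGroupType) (R : subgroup_rel gT) : Prop :=
  forall L K H : {group gT}, L \subset K -> K \subset H -> R L H -> R K H.

Definition rel_subset (gT : finGroupType) (R R' : subgroup_rel gT) : Prop :=
  forall K H : {group gT}, R K H -> R' K H.

Definition compatible_pair (gT : finGroupType) (G : {group gT})
    (T T' : subgroup_rel gT) : Prop :=
  rel_subset T T' /\
  (forall A B C : {group gT}, A \subset G -> B \subset A -> C \subset A ->
     T B A -> T' (B :&: C)%G B -> T' C A).

From mathcomp Require Import all_boot all_fingroup.

(* For B -> A in T and B :&: C -> B in T', transitivity in T' gives
   B :&: C -> A, and saturation moves the source up to B :&: C <= C <= A. *)

Set Implicit Arguments.
Unset Strict Implicit.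
Unset Printing Implicit Defensive.

Definition transitive_rel (gT : finGroupType) (R : subgroup_rel gT) : Prop :=
  forall L K H : {group gT}, R L K -> R K H -> R L H.

Lemma transfer_system_trans (gT : finGroupType) (G : {group gT})
    (R : subgroup_rel gT) :
  is_transfer_system G R -> transitive_rel R.
Proof. by case=> _ [_ [_ [trR _]]]. Qed.

Lemma saturated_trans_compatible (gT : finGroupType) (G : {group gT})
    (T T' : subgroup_rel gT) :
  transitive_rel T' -> saturated T' -> rel_subset T T' ->
  compatible_pair G T T'.
Proof.
move=> trT' satT' sTT'; split=> // A B C _ _ sCA TBA T'BCB.
have T'BCA : T' (B :&: C)%G A by apply: trT' T'BCB (sTT' _ _ TBA).
by apply: satT' T'BCA; rewrite ?subsetIr.
Qed.

Theorem mainTheorem4 (gT : finGroupType) (G : {group gT}) (T T' : subgroup_rel gT) :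
  is_transfer_system G T -> is_transfer_system G T' ->
  saturated T' -> rel_subset T T' ->
  compatible_pair G T T'.
Proof.
move=> _ /transfer_system_trans trT'.
exact: saturated_trans_compatible.
Qed.
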